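(* For every prime $p\equiv 2 \pmod 3$, \begin{align*} \sum_{k=0}^{(p+1)/3}(6k-1)(18k^2-6k+1)\frac{(-1/3)^4_k}{k!^4}\equiv0\pmod{p^4}. \end{align*}
   Context: $(x)_0=1$ and $(x)_k=x(x+1)\cdots(x+k-1)$ is the Pochhammer symbol; $(x)_k^4$ means $((x)_k)^4$. The congruence of rational numbers modulo $p^4$ means the difference, written in lowest terms, has numerator divisible by $p^4$ and denominator not divisible by $p$. *)

From mathcomp Require Import all_boot all_order all_algebra.
Set Implicit Arguments. Unset Strict Implicit. Unset Printing Implicit Defensive.
Import Order.TTheory GRing.Theory Num.Theory.
Local Open Scope ring_scope.

Definition pochhammer (x : rat) (k : nat) : rat :=
  \prod_(i < k) (x + i%:R).

(* Congruence of rationals modulo an integer m: the difference a - b, written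
   in lowest terms (numq/denq are coprime, denq > 0), has numerator divisible
   by m and denominator coprime to m.  For m = p^4 with p prime, "coprime to
   p^4" is the same as "not divisible by p". *)
Definition rat_cong_mod (a b : rat) (p e : nat) : Prop :=
  ((p ^ e)%:Z %| numq (a - b))%Z /\ ~~ ((p%:Z) %| denq (a - b))%Z.

From mathcomp Require Import all_boot all_order all_algebra.
From mathcomp Require Import ring zify.
Import Order.TTheory GRing.Theory Num.Theory.
Local Open Scope ring_scope.

(* With a = -1/3, the summand is G(k+1) - G(k) for G(k) = -81 ((a)_k k / k!)^4,
   so the partial sum up to n equals -81 ((a)_(n+1) / n!)^4.  For
   n = (p+1)/3 the last factor of (a)_(n+1) is a + n = p/3, hence the sum is
   -p^4 ((a)_n / n!)^4, and 3^n (a)_n is an integer while n! is prime to p. *)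

Lemma rat_cong_mod0_of_mul_pexp (p e d : nat) (x : rat) (y : int) :
  prime p -> ~~ (p %| d)%N -> x * d%:R = (p ^ e)%:R * y%:~R ->
  rat_cong_mod x 0 p e.
Proof.
move=> p_pr p_ndvd_d xdE; rewrite /rat_cong_mod subr0.
have numE : numq x * d%:Z = (p ^ e)%:Z * y * denq x.
  by apply: (@intr_inj rat); rewrite !intrM numqE -xdE; ring.
split.
  have co_pe_d : coprimez (p ^ e)%:Z d by rewrite coprimezE coprimeXl ?prime_coprime.
  by rewrite -(Gauss_dvdzl _ co_pe_d) numE -mulrA dvdz_mulr.
apply: contra p_ndvd_d => p_dvd_den.
have den_dvd_d : (denq x %| d%:Z)%Z.
  have co_den_num : coprimez (denq x) (numq x).
    by rewrite coprimezE coprime_sym coprime_num_den.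
  by rewrite -(Gauss_dvdzr _ co_den_num) numE dvdz_mull.
by have := dvdz_trans p_dvd_den den_dvd_d.
Qed.

Lemma pochhammerS (x : rat) (m : nat) :
  pochhammer x m.+1 = pochhammer x m * (x + m%:R).
Proof. by rewrite /pochhammer big_ord_recr. Qed.

Lemma pochhammer_scaled_int (x : rat) (d m : nat) :
  x * d%:R \is a Num.int -> pochhammer x m * d%:R ^+ m \is a Num.int.
Proof.
move=> xd_int; rewrite /pochhammer -[in d%:R ^+ m](card_ord m) -prodrMr.
by apply: rpred_prod => i _; rewrite mulrDl rpredD // -natrM rpred_nat.
Qed.

Lemma pochhammer_neg_third (m : nat) :
  exists Y : int, pochhammer (- (1 / 3)) m = Y%:~R / 3 ^+ m.
Proof.
have /intrP[Y YE] : pochhammer (- (1 / 3)) m * 3%:R ^+ m \is a Num.int.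
  by apply: pochhammer_scaled_int; rewrite mulNr div1r mulVf // rpredN.
by exists Y; rewrite -YE mulfK // expf_neq0.
Qed.

Lemma prime_ndvd_fact (p k : nat) : prime p -> (k < p)%N -> ~~ (p %| k`!)%N.
Proof.
move=> p_pr; elim: k => [_|k IHk lt_kp]; first by rewrite fact0 Euclid_dvd1.
by rewrite factS Euclid_dvdM // gtnNdvd //= IHk // ltnW.
Qed.

Lemma partial_sum_closed_form (m : nat) :
  \sum_(0 <= k < m.+1)
     (6 * k%:R - 1) * (18 * k%:R ^+ 2 - 6 * k%:R + 1)
     * (pochhammer (- (1 / 3)) k) ^+ 4 / (k`!%:R) ^+ 4
  = -81 * (pochhammer (- (1 / 3)) m.+1 / m`!%:R) ^+ 4.
Proof.
elim: m => [|m IHm].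
  by rewrite big_nat1 /pochhammer big_ord1 big_ord0 /= fact0; field.
rewrite big_mkord in IHm; rewrite big_mkord big_ord_recr /= IHm.
rewrite [pochhammer _ m.+2]pochhammerS factS natrM.
have fact_neq0 : m`!%:R != 0 :> rat by rewrite pnatr_eq0 -lt0n fact_gt0.
have succ_neq0 : m.+1%:R != 0 :> rat by rewrite pnatr_eq0.
rewrite -[m.+1%:R]natr1 in succ_neq0 *; field.
by rewrite fact_neq0 succ_neq0.
Qed.

Theorem mainTheorem6 (p : nat) :
  prime p -> (p %% 3 = 2)%N ->
  rat_cong_mod
    (\sum_(0 <= k < ((p + 1) %/ 3).+1)
       (6 * k%:R - 1) * (18 * k%:R ^+ 2 - 6 * k%:R + 1)
       * (pochhammer (- (1 / 3)) k) ^+ 4 / (k`!%:R) ^+ 4)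
    0 p 4.
Proof.
move=> p_pr p_mod3; set n := ((p + 1) %/ 3)%N.
have n3E : (n * 3 = p + 1)%N by rewrite /n; lia.
clearbody n.
have lt_np : (n < p)%N by have := prime_gt1 p_pr; lia.
have p_ndvd3 : ~~ (p %| 3)%N.
  by rewrite -prime_coprime // coprime_sym prime_coprime // /dvdn p_mod3.
have [Y pochE] := pochhammer_neg_third n.
have last_factorE : - (1 / 3) + n%:R = p%:R / 3 :> rat.
  by apply: (@mulIf _ 3) => //; rewrite mulfVK // mulrDl -natrM n3E natrD; field.
apply: (@rat_cong_mod0_of_mul_pexp _ _ ((3 ^ n * n`!) ^ 4) _ (- Y ^+ 4) p_pr).
  rewrite Euclid_dvdX // Euclid_dvdM // Euclid_dvdX // (negbTE p_ndvd3).
  by rewrite (negbTE (prime_ndvd_fact _ _ p_pr lt_np)).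
rewrite partial_sum_closed_form pochhammerS last_factorE pochE.
rewrite natrX natrM natrX rmorphN rmorphXn /=.
have fact_neq0 : n`!%:R != 0 :> rat by rewrite pnatr_eq0 -lt0n fact_gt0.
by field; rewrite fact_neq0 expf_neq0.
Qed.
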